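(* Let $H$ be a real Hilbert space, let $D\subseteq H$ be a nonempty closed convex set, and let $C_1,\dots,C_m\subseteq D$ be closed convex sets with $C:=\bigcap_{i=1}^m C_i\neq\emptyset$. Let $P_i:=P_{C_i}:D\to C_i$ be the metric projection onto $C_i$. Fix $(\Omega,w)\in\mathcal{M}$, let $(\lambda_k)_{k\in\mathbb{N}}$ be a steering sequence, and let $u,x^0\in D$. For an index vector $t=(t_1,\dots,t_q)$ let $P[t]:=P_{t_q}P_{t_{q-1}}\cdots P_{t_1}$. Then the sequence defined by $$x^{k+1}=\lambda_k u+(1-\lambda_k)\sum_{t\in\Omega}w(t)P[t](x^k),\quad k\ge0,$$ converges strongly to $P_C(u)$.
   Context: An index vector is a finite tuple $t=(t_1,\dots,t_q)$ with each $t_\ell\in\{1,\dots,m\}$. A finite set $\Omega$ of index vectors is fit if every $i\in\{1,\dots,m\}$ appears as a component of some $t\in\Omega$. $\mathcal{M}$ denotes the collection of all pairs $(\Omega,w)$ where $\Omega$ is a fit finite set of index vectors and $w:\Omega\to(0,1]$ satisfies $\sum_{t\in\Omega}w(t)=1$. A steering sequence is a real sequence $(\lambda_k)_{k\in\mathbb{N}}$ with $\lambda_k\in[0,1]$ for all $k$, $\lim_{k\to\infty}\lambda_k=0$, $\sum_{k=0}^\infty\lambda_k=+\infty$, and $\sum_{k=0}^\infty|\lambda_{k+1}-\lambda_k|<\infty$. *)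

From HB Require Import structures.
From mathcomp Require Import all_boot all_order all_algebra.
From mathcomp Require Import finmap.
From mathcomp Require Import all_classical all_reals all_analysis.
Set Implicit Arguments. Unset Strict Implicit. Unset Printing Implicit Defensive.
Import Order.TTheory GRing.Theory Num.Theory.
Import numFieldNormedType.Exports.
Local Open Scope classical_set_scope.
Local Open Scope ring_scope.

Definition hilbert_inner (R : realType) (H : completeNormedModType R)
  (ip : H -> H -> R) : Prop :=
  [/\ forall x y : H, ip x y = ip y x,
      forall (a : R) (x y z : H), ip (a *: x + y) z = a * ip x z + ip y z
    & forall x : H, ip x x = `|x| ^+ 2].

Definition is_metric_proj (R : realType) (H : normedModType R) (S : set H)
  (x p : H) : Prop :=
  S p /\ forall y : H, S y -> `|x - p| <= `|x - y|.

(* index vectors over {1..m} (0-based here: 'I_m), of length q >= 1 *)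
Definition index_vector (m : nat) (t : seq 'I_m) : bool := (0 < size t)%N.

Definition fit (m : nat) (Omega : {fset (seq 'I_m)}) : Prop :=
  (forall t, t \in Omega -> index_vector t) /\
  (forall i : 'I_m, exists2 t, t \in Omega & i \in t).

Definition in_M (R : realType) (m : nat) (Omega : {fset (seq 'I_m)})
  (w : seq 'I_m -> R) : Prop :=
  [/\ fit Omega, forall t, t \in Omega -> 0 < w t <= 1
    & \sum_(t <- Omega) w t = 1].

Definition steering (R : realType) (lam : nat -> R) : Prop :=
  [/\ forall k, 0 <= lam k <= 1,
      lam @ \oo --> 0,
      (series lam) @ \oo --> +oo
    & cvg ((series (fun k => `|lam k.+1 - lam k|)) @ \oo)].

(* P[t] = P_{t_q} ... P_{t_1} : apply P_{t_1} first *)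
Definition Pt (m : nat) (H : Type) (P : 'I_m -> H -> H) (t : seq 'I_m) (x : H) : H :=
  foldl (fun y i => P i y) x t.

From HB Require Import structures.
From mathcomp Require Import all_boot all_order all_algebra.
From mathcomp Require Import finmap.
From mathcomp Require Import all_classical all_reals all_analysis.
From mathcomp Require Import ring lra.
Import Order.TTheory GRing.Theory Num.Theory.
Import numFieldNormedType.Exports.
Local Open Scope classical_set_scope.
Local Open Scope ring_scope.
Set Implicit Arguments. Unset Strict Implicit. Unset Printing Implicit Defensive.

(* Write T y := sum_{t in Omega} w(t) P[t](y).  The iteration of the theorem
   is Halpern's iteration x (k+1) = lam k u + (1 - lam k) T (x k), so the
   proof has two independent halves:
   1. Geometry of projections: each P_i is nonexpansive and satisfies the
      Pythagorean inequality on C_i; hence every P[t] is nonexpansive and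
      strictly quasi-nonexpansive, and the average T maps D into D, is
      nonexpansive, and (Omega being fit) has exactly C as its fixed points
      in D.
   2. Halpern's theorem for a nonexpansive self-map T of a closed convex
      set D with a fixed point: Browder's points z n with
      z n - T z n = (u - z n)/(n+1) converge to the fixed point nearest
      to u; the iterates are asymptotically regular, and Xu's lemma on
      real recursive inequalities yields x k --> lim z n.
   The theorem combines the two: the fixed point of T nearest to u is the
   metric projection of u onto C. *)

Lemma ler_sqr_nneg (R : realType) (a b : R) : 0 <= a -> 0 <= b ->
  (a ^+ 2 <= b ^+ 2) = (a <= b).
Proof. by move=> a0 b0; rewrite ler_sqr ?nnegrE. Qed.

Section InnerProduct.
Variables (R : realType) (H : completeNormedModType R) (ip : H -> H -> R).
Hypothesis hI : hilbert_inner ip.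

Lemma ipC x y : ip x y = ip y x. Proof. by case: hI. Qed.
Lemma ipxx x : ip x x = `|x| ^+ 2. Proof. by case: hI. Qed.

Lemma ipDl x y z : ip (x + y) z = ip x z + ip y z.
Proof. by case: hI => _ lin _; have := lin 1 x y z; rewrite scale1r mul1r. Qed.

Lemma ipZl a x z : ip (a *: x) z = a * ip x z.
Proof.
case: hI => _ lin _; have ip0 : ip 0 z = 0 by have := ipDl 0 0 z; rewrite addr0; lra.
by rewrite -[a *: x]addr0 lin ip0 addr0.
Qed.

Lemma ipNl x z : ip (- x) z = - ip x z.
Proof. by rewrite -scaleN1r ipZl mulN1r. Qed.
Lemma ipBl x y z : ip (x - y) z = ip x z - ip y z.
Proof. by rewrite ipDl ipNl. Qed.
Lemma ipDr x y z : ip z (x + y) = ip z x + ip z y.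
Proof. by rewrite ipC ipDl ![ip _ z]ipC. Qed.
Lemma ipZr a x z : ip z (a *: x) = a * ip z x.
Proof. by rewrite ipC ipZl ipC. Qed.
Lemma ipNr x z : ip z (- x) = - ip z x.
Proof. by rewrite ipC ipNl ipC. Qed.
Lemma ipBr x y z : ip z (x - y) = ip z x - ip z y.
Proof. by rewrite ipDr ipNr. Qed.

Lemma normD2 x y : `|x + y| ^+ 2 = `|x| ^+ 2 + 2 * ip x y + `|y| ^+ 2.
Proof. by rewrite -!ipxx ipDl !ipDr [ip y x]ipC; ring. Qed.
Lemma normB2 x y : `|x - y| ^+ 2 = `|x| ^+ 2 - 2 * ip x y + `|y| ^+ 2.
Proof. by rewrite normD2 ipNr normrN; ring. Qed.

(* Cauchy-Schwarz (one-sided), from the triangle inequality. *)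
Lemma cauchy_schwarz x y : ip x y <= `|x| * `|y|.
Proof.
have h2 : `|x + y| ^+ 2 <= (`|x| + `|y|) ^+ 2.
  by rewrite ler_sqr_nneg ?addr_ge0 // ler_normD.
rewrite normD2 in h2; nra.
Qed.

Lemma normD2_le x y : `|x + y| ^+ 2 <= `|y| ^+ 2 + 2 * ip x (x + y).
Proof. rewrite normD2 ipDr ipxx; have := sqr_ge0 `|x|; lra. Qed.

Lemma ip_shift_le a b d : ip (a + d) (b + d) <= ip a b + `|d| * (`|a| + `|b| + `|d|).
Proof.
rewrite ipDl !ipDr ipxx; have := cauchy_schwarz a d; have := cauchy_schwarz d b.
rewrite !expr2; nra.
Qed.

End InnerProduct.

Lemma convex_comb (R : realType) (H : completeNormedModType R) (D : set H)
    x y (s : R) : convex_set D -> D x -> D y -> 0 <= s <= 1 ->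
  D (s *: x + (1 - s) *: y).
Proof.
move=> cD Dx Dy /andP[s0 s1].
by have := cD x y (Itv01 s0 s1) (mem_set Dx) (mem_set Dy); rewrite inE.
Qed.

Lemma conv_subr (R : pzRingType) (H : lmodType R) (a b p : H) (s : R) :
  s *: a + (1 - s) *: b - p = s *: (a - p) + (1 - s) *: (b - p).
Proof. by rewrite !scalerBr addrACA -opprD -scalerDl [s + _]addrC subrK scale1r. Qed.

Lemma conv_subl (R : pzRingType) (H : lmodType R) (y c p : H) (s : R) :
  y - (s *: c + (1 - s) *: p) = (y - p) - s *: (c - p).
Proof. by rewrite -(subrKA p y) -[p - (_ + _)]opprB conv_subr subrr scaler0 addr0. Qed.

Lemma conv_sub_conv (R : pzRingType) (H : lmodType R) (a b c : H) (s t : R) :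
  (s *: a + (1 - s) *: b) - (t *: a + (1 - t) *: c) =
  (s - t) *: (a - c) + (1 - s) *: (b - c).
Proof.
rewrite !scalerBr !scalerBl !scale1r opprD !opprB [RHS]addrACA subrKA addrA.
by rewrite [s *: a + _ - _]addrAC.
Qed.

Section MetricProjection.
Variables (R : realType) (H : completeNormedModType R) (ip : H -> H -> R).
Hypothesis hI : hilbert_inner ip.
Variables (S : set H) (cS : convex_set S).

Lemma proj_variational y p c : is_metric_proj S y p -> S c ->
  ip (y - p) (c - p) <= 0.
Proof.
move=> [Sp hp] Sc; set a := ip (y - p) (c - p); set K := `|c - p| ^+ 2.
have K0 : 0 <= K by rewrite /K exprn_ge0.
(* moving p towards c by s in ]0,1] cannot decrease the distance to y *)
have key s : 0 < s -> s <= 1 -> 2 * a <= s * K.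
  move=> s0 s1; have s01 : 0 <= s <= 1 by rewrite (ltW s0) s1.
  have h := hp _ (convex_comb cS Sc Sp s01).
  rewrite conv_subl -ler_sqr_nneg // [in leRHS](normB2 hI) (ipZr hI) normrZ in h.
  by move: h; rewrite gtr0_norm // exprMn -/a -/K; nra.
have [//|a0] := leP a 0.
have Ka : 0 < K + a by lra.
have s0 : 0 < a / (K + a) by rewrite divr_gt0.
have s1 : a / (K + a) <= 1 by rewrite ler_pdivrMr // mul1r; lra.
have sKa : a / (K + a) * (K + a) = a by rewrite mulfVK // gt_eqF.
have := key _ s0 s1; nra.
Qed.

(* Metric projections onto convex sets are firmly, hence plainly,
   nonexpansive. *)
Lemma proj_nonexp x y p q : is_metric_proj S x p -> is_metric_proj S y q ->
  `|p - q| <= `|x - y|.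
Proof.
move=> hp hq.
have h1 := proj_variational hp hq.1; have h2 := proj_variational hq hp.1.
have firm : `|p - q| ^+ 2 <= ip (x - y) (p - q).
  move: h1 h2; rewrite -(ipxx hI) !(ipBl hI) !(ipBr hI) ![ip q p](ipC hI); lra.
have := cauchy_schwarz hI (x - y) (p - q).
have := normr_ge0 (p - q); have := normr_ge0 (x - y); nra.
Qed.

Lemma proj_pythagoras y p c : is_metric_proj S y p -> S c ->
  `|y - p| ^+ 2 + `|p - c| ^+ 2 <= `|y - c| ^+ 2.
Proof.
move=> hp Sc; have h := proj_variational hp Sc.
have -> : y - c = (y - p) - (c - p) by rewrite opprB addrA subrK.
rewrite [in leRHS](normB2 hI) -(normrN (p - c)) opprB; lra.
Qed.

Lemma proj_no_progress y p c : is_metric_proj S y p -> S c ->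
  `|y - c| <= `|p - c| -> p = y.
Proof.
move=> hp Sc; rewrite -ler_sqr_nneg // => hle.
have := proj_pythagoras hp Sc; have := sqr_ge0 `|y - p|.
move=> ? ?; have : `|y - p| ^+ 2 == 0 by rewrite eq_le sqr_ge0; lra.
by rewrite sqrf_eq0 normr_eq0 subr_eq0 => /eqP.
Qed.

End MetricProjection.

Lemma proj_fix (R : realType) (H : normedModType R) (S : set H) y p :
  is_metric_proj S y p -> S y -> p = y.
Proof.
move=> [Sp hp] Sy; have := hp _ Sy; rewrite subrr normr0 normr_le0 subr_eq0.
by move=> /eqP.
Qed.

Lemma convex_weighted_sum (R : realType) (H : completeNormedModType R)
    (D : set H) (I : eqType) (s : seq I) (w : I -> R) (v : I -> H) :
  convex_set D -> D !=set0 ->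
  (forall t, t \in s -> 0 <= w t) -> (forall t, t \in s -> D (v t)) ->
  exists2 d, D d & \sum_(t <- s) w t *: v t = (\sum_(t <- s) w t) *: d.
Proof.
move=> cD [d0 Dd0]; elim: s => [|a s IH] hw hv.
  by exists d0; rewrite // !big_nil scale0r.
rewrite !big_cons; have [d Dd ->] :
    exists2 d, D d & \sum_(t <- s) w t *: v t = (\sum_(t <- s) w t) *: d.
  by apply: IH => t ts; [apply: hw | apply: hv]; rewrite inE ts orbT.
have wa : 0 <= w a by apply: hw; rewrite inE eqxx.
have Dva : D (v a) by apply: hv; rewrite inE eqxx.
have W0 : 0 <= \sum_(t <- s) w t.
  by rewrite big_seq sumr_ge0 // => t ts; apply: hw; rewrite inE ts orbT.
set W := \sum_(t <- s) w t in W0 *.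
have [S0|S0] := eqVneq (w a + W) 0.
  have wa0 : w a = 0 by lra.
  have W00 : W = 0 by lra.
  by exists d; rewrite // wa0 W00 add0r !scale0r addr0.
(* the new point is the barycentre of v a and d with weights w a and W *)
have Sp : 0 < w a + W by rewrite lt_neqAle eq_sym S0 addr_ge0.
set al := w a / (w a + W).
have alS : al * (w a + W) = w a by rewrite /al mulfVK.
have al01 : 0 <= al <= 1 by rewrite divr_ge0 ?ler_pdivrMr //=; lra.
exists (al *: v a + (1 - al) *: d); first exact: convex_comb.
rewrite scalerDr !scalerA [(w a + W) * al]mulrC alS.
congr (_ + _); congr (_ *: _); nra.
Qed.

Section ProjectionProducts.
Variables (R : realType) (H : completeNormedModType R) (ip : H -> H -> R).
Hypothesis hI : hilbert_inner ip.
Variables (D : set H) (m : nat) (C : 'I_m -> set H) (P : 'I_m -> H -> H).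
Hypothesis hC : forall i, closed (C i) /\ convex_set (C i) /\ C i `<=` D.
Hypothesis hP : forall i y, D y -> is_metric_proj (C i) y (P i y).

Lemma proj_in_D i y : D y -> D (P i y).
Proof. by move=> Dy; exact: (hC i).2.2 _ (hP i Dy).1. Qed.

Lemma Pt_in_D t y : D y -> D (Pt P t y).
Proof. by elim: t y => //= i t IH y Dy; apply/IH/proj_in_D. Qed.

Lemma Pt_nonexp t x y : D x -> D y -> `|Pt P t x - Pt P t y| <= `|x - y|.
Proof.
elim: t x y => //= i t IH x y Dx Dy.
apply: le_trans (IH _ _ (proj_in_D i Dx) (proj_in_D i Dy)) _.
exact: (proj_nonexp hI (hC i).2.1 (hP i Dx) (hP i Dy)).
Qed.

Lemma Pt_fixC t y : (forall i, C i y) -> Pt P t y = y.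
Proof.
move=> Cy; elim: t => //= i t IH.
by rewrite (proj_fix (hP i ((hC i).2.2 _ (Cy i))) (Cy i)).
Qed.

Section Quasi.
Variables (p : H) (Cp : forall i, C i p).

Lemma Pt_quasi t y : D y -> `|Pt P t y - p| <= `|y - p|.
Proof.
elim: t y => //= i t IH y Dy; apply: le_trans (IH _ (proj_in_D i Dy)) _.
rewrite -ler_sqr_nneg //; have := proj_pythagoras hI (hC i).2.1 (hP i Dy) (Cp i).
have := sqr_ge0 `|y - P i y|; lra.
Qed.

Lemma Pt_no_progress t y : D y -> `|y - p| <= `|Pt P t y - p| ->
  forall i, i \in t -> C i y.
Proof.
elim: t y => //= i t IH y Dy hle.
have Piy : P i y = y.
  apply: (proj_no_progress hI (hC i).2.1 (hP i Dy) (Cp i)).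
  exact: le_trans hle (Pt_quasi t (proj_in_D i Dy)).
move=> j; rewrite inE => /predU1P[->|jt]; first by rewrite -Piy; exact: (hP i Dy).1.
by apply: IH jt; rewrite // -{2}Piy.
Qed.

End Quasi.
End ProjectionProducts.

Definition avg_op (R : realType) (H : completeNormedModType R) (m : nat)
  (P : 'I_m -> H -> H) (s : seq (seq 'I_m)) (w : seq 'I_m -> R) (y : H) : H :=
  \sum_(t <- s) w t *: Pt P t y.

Section AveragedOperator.
Variables (R : realType) (H : completeNormedModType R) (ip : H -> H -> R).
Hypothesis hI : hilbert_inner ip.
Variables (D : set H) (m : nat) (C : 'I_m -> set H) (P : 'I_m -> H -> H).
Hypothesis hC : forall i, closed (C i) /\ convex_set (C i) /\ C i `<=` D.
Hypothesis hP : forall i y, D y -> is_metric_proj (C i) y (P i y).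
Variables (s : seq (seq 'I_m)) (w : seq 'I_m -> R).
Hypotheses (hw : forall t, t \in s -> 0 < w t) (hs : \sum_(t <- s) w t = 1).

Local Notation T := (avg_op P s w).

Lemma avg_in_D : convex_set D -> D !=set0 -> forall y, D y -> D (T y).
Proof.
move=> cD nD y Dy; have [d Dd e] := convex_weighted_sum cD nD
  (fun t ts => ltW (hw ts)) (fun t _ => Pt_in_D hC hP t Dy).
by rewrite /avg_op e hs scale1r.
Qed.

Lemma avg_nonexp x y : D x -> D y -> `|T x - T y| <= `|x - y|.
Proof.
move=> Dx Dy; rewrite /avg_op -sumrB; apply: le_trans (ler_norm_sum _ _ _) _.
rewrite -[leRHS]mul1r -hs mulr_suml big_seq [leRHS]big_seq.
apply: ler_sum => t ts; rewrite -scalerBr normrZ gtr0_norm ?hw //.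
by rewrite ler_pM2l ?hw // (Pt_nonexp hI hC hP).
Qed.

Lemma avg_fixC y : (forall i, C i y) -> T y = y.
Proof.
move=> Cy; rewrite /avg_op; under eq_bigr do rewrite (Pt_fixC hC hP _ Cy).
by rewrite -scaler_suml hs scale1r.
Qed.

(* For a fit family, the fixed points of T in D lie in C: at a fixed point
   y, averaging forces |P[t] y - p| = |y - p| for every t and every p in
   C, so y lies in each C_i occurring in some t. *)
Lemma avg_fix_in_C : (forall i, exists2 t, t \in s & i \in t) ->
  (exists p, forall i, C i p) -> forall y, D y -> T y = y -> forall i, C i y.
Proof.
move=> hfit [p Cp] y Dy Ty.
pose gap t := w t * (`|y - p| - `|Pt P t y - p|).
have gap_ge0 t : t \in s -> 0 <= gap t.
  by move=> ts; rewrite mulr_ge0 ?subr_ge0 ?(ltW (hw ts)) ?(Pt_quasi hI hC hP Cp _ Dy).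
have gap_le0 : \sum_(t <- s) gap t <= 0.
  have Tp : y - p = \sum_(t <- s) w t *: (Pt P t y - p).
    under eq_bigr do rewrite scalerBr.
    by rewrite sumrB -scaler_suml hs scale1r -[X in X - _]Ty.
  have hle : `|y - p| <= \sum_(t <- s) w t * `|Pt P t y - p|.
    rewrite {1}Tp; apply: le_trans (ler_norm_sum _ _ _) _.
    by rewrite big_seq [leRHS]big_seq; apply: ler_sum => t ts; rewrite normrZ gtr0_norm ?hw.
  rewrite (eq_bigr (fun t => w t * `|y - p| - w t * `|Pt P t y - p|)).
    by rewrite sumrB -mulr_suml hs mul1r; lra.
  by move=> t _; rewrite /gap mulrBr.
have gap0 t : t \in s -> gap t = 0.
  move=> ts; have : \sum_(t <- s | t \in s) gap t == 0.
    by rewrite eq_le -big_seq gap_le0 big_seq sumr_ge0.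
  by rewrite psumr_eq0 // => /allP/(_ t ts); rewrite ts => /eqP.
move=> i; have [t ts it] := hfit i.
apply: (Pt_no_progress hI hC hP Cp Dy _ it).
have /eqP := gap0 t ts; rewrite mulf_eq0 gt_eqF ?hw //= subr_eq0 => /eqP ->.
exact: lexx.
Qed.

End AveragedOperator.

Lemma near_oo (P : nat -> Prop) :
  (\forall n \near \oo, P n) -> exists N, forall n, (N <= n)%N -> P n.
Proof. by case=> N _ hN; exists N => n Nn; exact: hN. Qed.

Lemma oo_near (P : nat -> Prop) :
  (exists N, forall n, (N <= n)%N -> P n) -> \forall n \near \oo, P n.
Proof. by case=> N hN; exists N. Qed.

Lemma cvg_eps (R : realType) (H : normedModType R) (z : nat -> H) (l : H) :
  z @ \oo --> l -> forall e, 0 < e -> exists N, forall n, (N <= n)%N -> `|l - z n| <= e.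
Proof. by move=> /cvgrPdist_le h e e0; apply: near_oo; apply: h. Qed.

Lemma eps_cvg (R : realType) (H : normedModType R) (z : nat -> H) (l : H) :
  (forall e, 0 < e -> exists N, forall n, (N <= n)%N -> `|l - z n| <= e) -> z @ \oo --> l.
Proof. by move=> h; apply/cvgrPdist_le => e e0; apply: oo_near; apply: h. Qed.

Lemma cauchy_seq_cvg (R : realType) (H : completeNormedModType R) (z : nat -> H) :
  (forall e, 0 < e -> exists N, forall n m, (N <= n)%N -> (N <= m)%N -> `|z n - z m| <= e) ->
  cvgn z.
Proof.
move=> hc; apply/cauchy_cvgP; apply/cauchy_ballP => _/posnumP[e]; near_simpl.
have e2 : 0 < e%:num / 2 by rewrite divr_gt0.
have [N hN] := hc _ e2.
exists ([set n | (N <= n)%N], [set n | (N <= n)%N]); first by split; exists N.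
move=> [n m] [/= Nn Nm]; rewrite -ball_normE /=.
by apply: le_lt_trans (hN _ _ Nn Nm) _; rewrite ltr_pdivrMr //; lra.
Qed.

Section TailSums.
Variable R : realType.

Definition diverging_tails (g : nat -> R) : Prop :=
  forall N B, exists K, forall k, (K <= k)%N -> B <= \sum_(N <= j < k) g j.

Definition vanishing_tails (b : nat -> R) : Prop :=
  forall e, 0 < e -> exists N, forall N' K, (N <= N')%N -> (N' <= K)%N ->
    \sum_(N' <= j < K) b j <= e.

Lemma divergent_tails (f : nat -> R) (s : nat) : series f @ \oo --> +oo ->
  diverging_tails (fun j => f (j + s)%N).
Proof.
move=> /cvgryPge hf N B.
have [K1 hK1] := near_oo (hf (B + series f (N + s)%N)).
exists (maxn K1 N) => k; rewrite geq_max => /andP[K1k Nk].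
have -> : \sum_(N <= j < k) f (j + s)%N = series f (k + s)%N - series f (N + s)%N.
  by rewrite sub_series_geq ?leq_add2r // big_addn addnK.
have := hK1 (k + s)%N (leq_trans K1k (leq_addr _ _)); lra.
Qed.

Lemma summable_tails (c : nat -> R) : (forall j, 0 <= c j) -> cvgn (series c) ->
  vanishing_tails c.
Proof.
move=> c0 hc e e0.
have mono : {homo series c : n m / (n <= m)%N >-> n <= m}.
  by move=> n m nm; rewrite -subr_ge0 sub_series_geq // sumr_ge0.
have le := nondecreasing_cvgn_le mono hc.
have [N hN] := cvg_eps hc e0.
exists N => N' K NN' N'K; rewrite -sub_series_geq //.
have := hN N' NN'; have := le K; have := ler_norm (limn (series c) - series c N').
lra.
Qed.

Lemma vanishing_tailsZ (K : R) (c : nat -> R) : 0 <= K -> (forall j, 0 <= c j) ->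
  vanishing_tails c -> vanishing_tails (fun j => K * c j).
Proof.
move=> K0 c0 hc e e0; have eK : 0 < e / (K + 1) by rewrite divr_gt0 //; lra.
have [N hN] := hc _ eK; exists N => N' M NN' N'M; rewrite -mulr_sumr.
have := hN N' M NN' N'M; rewrite ler_pdivlMr; last lra.
have : 0 <= \sum_(N' <= j < M) c j by apply: sumr_ge0.
nra.
Qed.

Section Contraction.
Variables (g c : nat -> R) (N : nat).
Hypotheses (g01 : forall k, 0 <= g k <= 1) (c0 : forall k, 0 <= c k).
Hypothesis cstep : forall k, (N <= k)%N -> c k.+1 <= (1 - g k) * c k.

(* The damping accumulates: c (N + n) (1 + sum_{N <= j < N + n} g j) <= c N,
   because (1 - h) (1 + S + h) <= 1 + S for h in [0,1] and S >= 0. *)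
Lemma damped_product n : c (N + n)%N * (1 + \sum_(N <= j < N + n) g j) <= c N.
Proof.
elim: n => [|n IH]; first by rewrite addn0 big_geq // addr0 mulr1.
rewrite addnS big_nat_recr ?leq_addr //=; apply: le_trans IH.
set S := \sum_(N <= j < N + n) g j.
have S0 : 0 <= S by apply: sumr_ge0 => j _; case/andP: (g01 j).
have := cstep (leq_addr n N); have := c0 (N + n)%N; have := c0 (N + n).+1.
case/andP: (g01 (N + n)%N).
set a := c (N + n)%N; set b := c (N + n).+1; set h := g (N + n)%N => ? ? ? ? ?.
have : b * (1 + (S + h)) <= (1 - h) * a * (1 + (S + h)) by apply: ler_wpM2r; lra.
have : (1 - h) * (1 + (S + h)) <= 1 + S by nra.
nra.
Qed.

Lemma damped_to0 : diverging_tails g ->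
  forall e, 0 < e -> exists K, forall k, (K <= k)%N -> c k <= e.
Proof.
move=> hdiv e e0; have [K hK] := hdiv N (c N / e).
exists (maxn K N) => k; rewrite geq_max => /andP[Kk Nk].
have := damped_product (k - N)%N; rewrite subnKC // => hprod.
rewrite leNgt; apply/negP => ek.
have : c k * (1 + c N / e) <= c N.
  by apply: le_trans hprod; apply: ler_wpM2l => //; have := hK k Kk; lra.
have : c N / e * e = c N by rewrite mulfVK // gt_eqF.
have : 0 <= c N / e by rewrite divr_ge0 // ltW.
nra.
Qed.

End Contraction.

Lemma xu_lemma (a g d b : nat -> R) :
  (forall k, 0 <= g k <= 1) -> (forall k, 0 <= b k) ->
  diverging_tails g -> vanishing_tails b ->
  (forall e, 0 < e -> exists N, forall k, (N <= k)%N -> d k <= e) ->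
  (forall k, a k.+1 <= (1 - g k) * a k + g k * d k + b k) ->
  forall e, 0 < e -> exists N, forall k, (N <= k)%N -> a k <= e.
Proof.
move=> g01 b0 hdiv hb hd hrec e e0; have e3 : 0 < e / 3 by rewrite divr_gt0.
have [N1 hN1] := hd _ e3; have [N2 hN2] := hb _ e3.
set N := maxn N1 N2.
pose B k := \sum_(N <= j < k) b j.
(* c k measures how far a k exceeds e/3 plus the perturbations since N *)
pose c k := Num.max (a k - e / 3 - B k) 0.
have B0 k : 0 <= B k by apply: sumr_ge0.
have c0 k : 0 <= c k by rewrite le_max lexx orbT.
have cge k : a k - e / 3 - B k <= c k by rewrite le_max lexx.
have cstep k : (N <= k)%N -> c k.+1 <= (1 - g k) * c k.
  move=> Nk; have dk : d k <= e / 3 by apply: hN1; apply: leq_trans (leq_maxl _ _) Nk.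
  have Bs : B k.+1 = B k + b k by rewrite /B big_nat_recr.
  have := hrec k; have := B0 k; have := cge k; have := c0 k; case/andP: (g01 k).
  move=> ? ? ? ? ? ?; rewrite ge_max mulr_ge0 ?subr_ge0 // andbT Bs; nra.
have [K hK] := damped_to0 g01 c0 cstep hdiv e3.
exists (maxn K N) => k; rewrite geq_max => /andP[Kk Nk].
have := hK k Kk; have := cge k; have := hN2 N k (leq_maxr _ _) Nk; rewrite -/(B k).
lra.
Qed.

End TailSums.

Lemma harmonic_le (R : realType) n m : (n <= m)%N -> harmonic m <= harmonic n :> R.
Proof. by move=> nm /=; rewrite lef_pV2 ?posrE // ler_nat ltnS. Qed.

Section Halpern.
Variables (R : realType) (H : completeNormedModType R) (ip : H -> H -> R).
Hypothesis hI : hilbert_inner ip.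
Variables (D : set H) (T : H -> H).
Hypotheses (cD : convex_set D) (clD : closed D).
Hypotheses (TD : forall y, D y -> D (T y))
  (Tne : forall x y, D x -> D y -> `|T x - T y| <= `|x - y|).
Variables (p0 u : H).
Hypotheses (Dp0 : D p0) (Tp0 : T p0 = p0) (Du : D u).

Lemma nonexp_monotone x y : D x -> D y -> 0 <= ip ((x - T x) - (y - T y)) (x - y).
Proof.
move=> Dx Dy; have -> : (x - T x) - (y - T y) = (x - y) - (T x - T y).
  by rewrite !opprD !opprK addrACA.
rewrite (ipBl hI) (ipxx hI).
have := cauchy_schwarz hI (T x - T y) (x - y); have := Tne Dx Dy.
have := normr_ge0 (x - y); have := normr_ge0 (T x - T y); nra.
Qed.

(* Browder's approximating points: for e > 0 the strict contraction
   y |-> (T y + e u) / (1 + e) has a fixed point z in D, i.e.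
   z - T z = e (u - z). *)
Lemma browder_point (e : R) : 0 < e -> exists2 z, D z & z - T z = e *: (u - z).
Proof.
move=> e0; set q := (1 + e)^-1.
have q0 : 0 < q by rewrite invr_gt0; lra.
have q1 : q < 1 by rewrite invf_lt1; lra.
pose f y := q *: T y + (1 - q) *: u.
have fD : {homo f : y / D y >-> D y}.
  by move=> y Dy; apply: (convex_comb cD (TD Dy) Du); rewrite !ltW.
have ctr : is_contraction (mkfun_fun fD).
  exists (NngNum (ltW q0)); split => //= -[a b] [/= Da Db].
  rewrite /mkfun /f opprD addrACA subrr addr0 -scalerBr normrZ gtr0_norm //.
  by apply: ler_wpM2l; [exact: ltW | exact: Tne].
have [z Dz zf] := banach_fixed_point ctr clD (ex_intro _ u Du).
exists z => //; have ez : z = q *: T z + (1 - q) *: u by exact: zf.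
have ez' : (1 - q) *: u = z - q *: T z by rewrite {1}ez addrAC subrr add0r.
have e1 : q *: (z - T z) = (1 - q) *: (u - z).
  by rewrite !scalerBr ez' scalerBl scale1r opprB [RHS]addrC [RHS]addrA subrK.
have -> : e = q^-1 * (1 - q) by rewrite /q invrK; field; lra.
by rewrite -scalerA -e1 scalerA mulVf ?scale1r // gt_eqF.
Qed.

Section BrowderCurve.
Variables (z : nat -> H) (hzD : forall n, D (z n))
  (hzA : forall n, z n - T (z n) = harmonic n *: (u - z n)).

Lemma browder_ip n y : D y ->
  harmonic n * ip (u - z n) (y - z n) <= `|y - T y| * `|y - z n|.
Proof.
move=> Dy; have h := nonexp_monotone Dy (hzD n).
rewrite hzA (ipBl hI) (ipZl hI) in h.
have := cauchy_schwarz hI (y - T y) (y - z n); lra.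
Qed.

Lemma browder_bounded p : D p -> T p = p -> forall n, `|z n - u| <= `|p - u|.
Proof.
move=> Dp Tp n; have h := nonexp_monotone (hzD n) Dp.
rewrite hzA Tp subrr subr0 (ipZl hI) pmulr_rge0 ?harmonic_gt0 // in h.
have e : z n - p = (u - p) - (u - z n) by rewrite opprB [RHS]addrC subrKA.
rewrite e (ipBr hI) (ipxx hI) in h.
have := cauchy_schwarz hI (u - z n) (u - p); rewrite !(distrC u) in h *.
have := normr_ge0 (z n - u); have := normr_ge0 (p - u); nra.
Qed.

Lemma browder_increments n m : (n <= m)%N ->
  `|z n - z m| ^+ 2 <= `|z m - u| ^+ 2 - `|z n - u| ^+ 2.
Proof.
move=> nm; have h := nonexp_monotone (hzD n) (hzD m).
set a := z n - u; set b := z m - u.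
have eab : z n - z m = a - b by rewrite opprB addrA subrK.
have ua : u - z n = - a by rewrite opprB.
have ub : u - z m = - b by rewrite opprB.
rewrite !hzA eab ua ub !scalerN in h; rewrite eab; clearbody a b.
rewrite (ipBl hI) !(ipNl hI) !(ipZl hI) !(ipBr hI) !(ipxx hI) (ipC hI b a) in h.
have [->|ab] := eqVneq a b.
  by rewrite subrr normr0 expr2 mulr0 subrr.
(* if a != b then |a - b|^2 > 0, which forces |a|^2 <= <a, b> *)
have ab2 : 0 < `|a - b| ^+ 2 by rewrite exprn_gt0 // normr_gt0 subr_eq0.
rewrite (normB2 hI) in ab2 *; set X := ip a b in h ab2 *.
have := harmonic_le R nm; have := @harmonic_gt0 R m; nra.
Qed.

(* Hence (z n) is Cauchy: its distances to u increase and are bounded by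
   the distance from u to the fixed point p0. *)
Lemma browder_cvg : cvgn z.
Proof.
pose r n := `|z n - u| ^+ 2.
have rmono : {homo r : n m / (n <= m)%N >-> n <= m}.
  move=> n m nm; have := browder_increments nm; have := sqr_ge0 `|z n - z m|.
  rewrite /r; lra.
have rub : has_ubound (range r).
  by exists (`|p0 - u| ^+ 2) => _ [n _ <-]; rewrite /r ler_sqr_nneg ?browder_bounded.
have rcv := nondecreasing_is_cvgn rmono rub.
have rle := nondecreasing_cvgn_le rmono rcv.
apply: cauchy_seq_cvg => e e0; have [N hN] := cvg_eps rcv (mulr_gt0 e0 e0).
suff near_N n m : (N <= n)%N -> (n <= m)%N -> `|z n - z m| <= e.
  exists N => n m Nn Nm; have [nm|/ltnW mn] := leqP n m; first exact: near_N.
  by rewrite distrC; apply: near_N.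
move=> Nn nm; rewrite -ler_sqr_nneg ?(ltW e0) //.
have := browder_increments nm; have := rle m; have := hN n Nn.
have := ler_norm (limn r - r n); rewrite /r expr2; lra.
Qed.

Lemma browder_limit_in_D : D (limn z).
Proof. by apply: (closed_cvg D clD _ _ browder_cvg); apply: nearW. Qed.

(* The limit is a fixed point of T, since |z n - T z n| = |u - z n|/(n+1). *)
Lemma browder_limit_fixed : T (limn z) = limn z.
Proof.
set zs := limn z; have Dzs := browder_limit_in_D.
apply/eqP; rewrite eq_sym -subr_eq0 -normr_le0.
apply/ler_addgt0Pr => e e0; rewrite add0r; have e3 : 0 < e / 3 by rewrite divr_gt0.
have hK : (fun n => harmonic n * `|p0 - u|) @ \oo --> 0.
  by rewrite -(mul0r `|p0 - u|); apply: cvgM; [exact: cvg_harmonic | exact: cvg_cst].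
have [N1 h1] := cvg_eps browder_cvg e3; have [N2 h2] := cvg_eps hK e3.
pose n := maxn N1 N2; have hn1 := h1 n (leq_maxl _ _).
have hn2 := h2 n (leq_maxr _ _); rewrite sub0r normrN in hn2.
have -> : zs - T zs = (zs - z n) + (z n - T (z n)) + (T (z n) - T zs).
  by rewrite (addrA (zs - z n)) subrK addrA subrK.
have t1 := Tne (hzD n) Dzs; rewrite [leRHS]distrC in t1.
have t2 : `|z n - T (z n)| <= harmonic n * `|p0 - u|.
  rewrite hzA normrZ ger0_norm ?harmonic_ge0 // ler_wpM2l ?harmonic_ge0 //.
  by rewrite distrC browder_bounded.
have := ler_normD (zs - z n + (z n - T (z n))) (T (z n) - T zs).
have := ler_normD (zs - z n) (z n - T (z n)).
have := ler_norm (harmonic n * `|p0 - u|); lra.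
Qed.

Lemma browder_limit_nearest y : D y -> T y = y -> `|u - limn z| <= `|u - y|.
Proof.
move=> Dy Ty; apply/ler_addgt0Pr => e e0.
have [N h] := cvg_eps browder_cvg e0; have := h N (leqnn _).
have := browder_bounded Dy Ty N; rewrite (distrC (z N)) (distrC y) => hN hzs.
have := ler_normD (u - z N) (z N - limn z); rewrite addrA subrK (distrC (z N)); lra.
Qed.

End BrowderCurve.

Lemma browder_curve : exists z : nat -> H,
  forall n, D (z n) /\ z n - T (z n) = harmonic n *: (u - z n).
Proof.
have pt n : exists y, D y /\ y - T y = harmonic n *: (u - y).
  by have [y Dy hy] := browder_point (@harmonic_gt0 R n); exists y.
by have [z hz] := boolp.choice pt; exists z.
Qed.

Section Iteration.
Variables (lam : nat -> R) (x : nat -> H).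
Hypotheses (hl : steering lam) (Dx0 : D (x 0%N))
  (hx : forall k, x k.+1 = lam k *: u + (1 - lam k) *: T (x k)).

Lemma lam01 k : 0 <= lam k <= 1. Proof. by case: hl. Qed.

Lemma iter_in_D k : D (x k).
Proof. by elim: k => // k IH; rewrite hx; apply: convex_comb (lam01 k) => //; exact: TD. Qed.

Let M := Num.max `|x 0%N - p0| `|u - p0|.

Lemma iter_bounded k : `|x k - p0| <= M.
Proof.
elim: k => [|k IH]; first by rewrite le_max lexx.
rewrite hx conv_subr; have /andP[l0 l1] := lam01 k.
apply: le_trans (ler_normD _ _) _; rewrite !normrZ !ger0_norm ?subr_ge0 //.
have t := Tne (iter_in_D k) Dp0; rewrite Tp0 in t.
have uM : `|u - p0| <= M by rewrite le_max lexx orbT.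
have : (1 - lam k) * `|T (x k) - p0| <= (1 - lam k) * M.
  by apply: ler_wpM2l; [lra | exact: le_trans t IH].
have : lam k * `|u - p0| <= lam k * M by exact: ler_wpM2l.
lra.
Qed.

Lemma u_sub_T_bounded k : `|u - T (x k)| <= 2 * M.
Proof.
have t := Tne Dp0 (iter_in_D k); rewrite Tp0 (distrC p0 (x k)) in t.
have := ler_normD (u - p0) (p0 - T (x k)); rewrite addrA subrK.
have := iter_bounded k; have : `|u - p0| <= M by rewrite le_max lexx orbT.
lra.
Qed.

(* Asymptotic regularity: consecutive iterates get arbitrarily close,
   by Xu's lemma applied to |x (k+2) - x (k+1)| <= (1 - lam (k+1))
   |x (k+1) - x k| + 2M |lam (k+1) - lam k|. *)
Lemma asymptotic_regularity e : 0 < e ->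
  exists N, forall k, (N <= k)%N -> `|x k.+1 - x k| <= e.
Proof.
case: hl => _ _ ldiv lvar; have M0 : 0 <= M by rewrite le_max normr_ge0.
apply: (@xu_lemma R (fun k => `|x k.+1 - x k|) (fun k => lam k.+1) (fun=> 0)
  (fun k => 2 * M * `|lam k.+1 - lam k|)) => //.
- by move=> k; exact: lam01.
- by move=> k; rewrite !mulr_ge0.
- move=> N B; have [K hK] := divergent_tails 1 ldiv N B; exists K => k /hK.
  by under eq_bigr do rewrite addn1.
- by apply: vanishing_tailsZ; rewrite ?mulr_ge0 //; exact: summable_tails.
- by move=> e1 e10; exists 0%N => k _; exact: ltW.
move=> k; rewrite mulr0 addr0 !hx conv_sub_conv -!hx.
apply: le_trans (ler_normD _ _) _; rewrite !normrZ; have /andP[l0 l1] := lam01 k.+1.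
rewrite (ger0_norm (_ : 0 <= 1 - lam k.+1)); last lra.
have := Tne (iter_in_D k.+1) (iter_in_D k); have := u_sub_T_bounded k.
have := normr_ge0 (lam k.+1 - lam k); set d := `|lam k.+1 - lam k| => ? ? ?.
have : d * `|u - T (x k)| <= 2 * M * d by rewrite mulrC; apply: ler_wpM2r.
have : (1 - lam k.+1) * `|T (x k.+1) - T (x k)| <= (1 - lam k.+1) * `|x k.+1 - x k|.
  by apply: ler_wpM2l => //; lra.
lra.
Qed.

(* Hence x k - T (x k) = (x k - x (k+1)) + lam k (u - T (x k)) tends to 0. *)
Lemma iter_residual e : 0 < e ->
  exists N, forall k, (N <= k)%N -> `|x k - T (x k)| <= e.
Proof.
move=> e0; case: hl => _ lam0 _ _; have e2 : 0 < e / 2 by rewrite divr_gt0.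
have M0 : 0 <= M by rewrite le_max normr_ge0.
have [N1 h1] := asymptotic_regularity e2.
have hlM : (fun k => lam k * (2 * M)) @ \oo --> 0.
  by rewrite -(mul0r (2 * M)); apply: cvgM; [exact: lam0 | exact: cvg_cst].
have [N2 h2] := cvg_eps hlM e2.
exists (maxn N1 N2) => k; rewrite geq_max => /andP[N1k N2k].
have := h2 k N2k; rewrite sub0r normrN => hk2.
have step : x k.+1 - T (x k) = lam k *: (u - T (x k)).
  by rewrite hx conv_subr subrr scaler0 addr0.
have -> : x k - T (x k) = (x k - x k.+1) + lam k *: (u - T (x k)).
  by rewrite -step subrKA.
apply: le_trans (ler_normD _ _) _; rewrite distrC.
have /andP[l0 _] := lam01 k.
have : `|lam k *: (u - T (x k))| <= lam k * (2 * M).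
  by rewrite normrZ ger0_norm // ler_wpM2l // u_sub_T_bounded.
have := h1 k N1k; have := ler_norm (lam k * (2 * M)); lra.
Qed.

(* One Halpern step towards a fixed point q, via the subdifferential
   inequality of the squared norm. *)
Lemma halpern_step q k : D q -> T q = q ->
  `|x k.+1 - q| ^+ 2 <=
  (1 - lam k) * `|x k - q| ^+ 2 + lam k * (2 * ip (u - q) (x k.+1 - q)).
Proof.
move=> Dq Tq; have /andP[l0 l1] := lam01 k.
have hq := Tne (iter_in_D k) Dq; rewrite Tq in hq.
have := normD2_le hI (lam k *: (u - q)) ((1 - lam k) *: (T (x k) - q)).
rewrite -conv_subr -hx (ipZl hI) normrZ ger0_norm ?subr_ge0 // exprMn.
have c0 : 0 <= 1 - lam k by rewrite subr_ge0.
have hq2 : `|T (x k) - q| ^+ 2 <= `|x k - q| ^+ 2 by rewrite ler_sqr_nneg.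
have a1 := ler_wpM2l (mulr_ge0 c0 c0) hq2.
have a2 : (1 - lam k) * ((1 - lam k) * `|x k - q| ^+ 2) <= (1 - lam k) * `|x k - q| ^+ 2.
  by rewrite ler_wpM2l // ler_piMl ?sqr_ge0 // lerBlDr lerDl.
rewrite mulrA in a2; lra.
Qed.

Section Limit.
Variables (z : nat -> H)
  (hz : forall n, D (z n) /\ z n - T (z n) = harmonic n *: (u - z n)).
Let hzD n := (hz n).1.
Let hzA n := (hz n).2.
Let zs := limn z.

Lemma iter_browder_dist k n : `|x k - z n| <= M + 2 * `|u - p0|.
Proof.
have -> : x k - z n = (x k - p0) + (p0 - u) + (u - z n) by rewrite !subrKA.
have := browder_bounded hzD hzA Dp0 Tp0 n; rewrite (distrC (z n)) (distrC p0).
have := ler_normD (x k - p0 + (p0 - u)) (u - z n); have := ler_normD (x k - p0) (p0 - u).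
rewrite (distrC p0); have := iter_bounded k; lra.
Qed.

(* For each fixed n, <u - z n, x k - z n> is eventually small, as
   |x k - T (x k)| tends to 0 while |x k - z n| stays bounded. *)
Lemma browder_ip_eventually n e : 0 < e ->
  exists N, forall k, (N <= k)%N -> ip (u - z n) (x k - z n) <= e.
Proof.
move=> e0; set K := M + 2 * `|u - p0|.
have K0 : 0 <= K by rewrite addr_ge0 ?mulr_ge0 // le_max normr_ge0.
have hn := @harmonic_gt0 R n.
have eps : 0 < harmonic n * e / (K + 1) by rewrite divr_gt0 ?mulr_gt0 //; lra.
have [N hN] := iter_residual eps.
exists N => k Nk; have := browder_ip hzD hzA n (iter_in_D k).
have := iter_browder_dist k n; have := hN k Nk; rewrite -/K => r d hip.
have b1 : `|x k - T (x k)| * `|x k - z n| <= harmonic n * e / (K + 1) * K.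
  by rewrite ler_pM.
have b2 : harmonic n * e / (K + 1) * K <= harmonic n * e.
  rewrite -mulrA ler_piMr ?mulr_ge0 ?(ltW e0) ?(ltW hn) //.
  by rewrite ler_pdivrMl ?mulr1; lra.
rewrite -(ler_pM2l hn); lra.
Qed.

(* limsup <u - zs, x k - zs> <= 0: choose z n close to zs, then shift
   the previous estimate from z n to zs. *)
Lemma limsup_ip e : 0 < e ->
  exists N, forall k, (N <= k)%N -> ip (u - zs) (x k - zs) <= e.
Proof.
move=> e0; set K := M + 2 * `|u - p0|; set L := `|u - p0| + K + 1.
have K0 : 0 <= K by rewrite addr_ge0 ?mulr_ge0 // le_max normr_ge0.
have L0 : 0 < L by rewrite /L; have := normr_ge0 (u - p0); lra.
have e2 : 0 < e / 2 by rewrite divr_gt0.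
have zcv := browder_cvg hzD hzA.
have [N1 h1] := cvg_eps zcv (divr_gt0 e2 L0); have [N2 h2] := cvg_eps zcv ltr01.
pose n := maxn N1 N2; have d1 := h1 n (leq_maxl _ _); have d2 := h2 n (leq_maxr _ _).
rewrite -/zs distrC in d1 d2.
have [N hN] := browder_ip_eventually n e2; exists N => k Nk.
have := ip_shift_le hI (u - z n) (x k - z n) (z n - zs); rewrite !subrKA.
have := browder_bounded hzD hzA Dp0 Tp0 n; rewrite (distrC (z n)) (distrC p0).
have := iter_browder_dist k n; rewrite -/K.
have : e / 2 / L * L = e / 2 by rewrite divfK // gt_eqF.
have := hN k Nk; have := normr_ge0 (z n - zs); have := normr_ge0 (u - z n).
have := normr_ge0 (x k - z n); rewrite /L; nra.
Qed.

(* Strong convergence to zs: Xu's lemma applied to |x k - zs|^2, with the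
   step estimate at the fixed point zs and limsup <u - zs, x k - zs> <= 0. *)
Lemma halpern_cvg : x @ \oo --> zs.
Proof.
case: hl => _ _ ldiv _; apply: eps_cvg => e e0.
have Dzs : D zs := browder_limit_in_D hzD hzA.
have Tzs : T zs = zs := browder_limit_fixed hzD hzA.
have [N hN] : exists N, forall k, (N <= k)%N -> `|x k - zs| ^+ 2 <= e * e.
  apply: (@xu_lemma R _ lam (fun k => 2 * ip (u - zs) (x k.+1 - zs)) (fun=> 0)).
  - exact: lam01.
  - by move=> k.
  - move=> N B; have [K hK] := divergent_tails 0 ldiv N B; exists K => k /hK.
    by under eq_bigr do rewrite addn0.
  - by move=> e1 e10; exists 0%N => N' K _ _; rewrite big1 // ltW.
  - move=> e1 e10; have [N hN] := limsup_ip (divr_gt0 e10 (ltr0Sn R 1)).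
    by exists N => k Nk; have := hN k.+1 (leqW Nk); lra.
  - by move=> k; rewrite addr0; exact: halpern_step.
  - by rewrite mulr_gt0.
by exists N => k /hN; rewrite -expr2 ler_sqr_nneg ?(ltW e0) // distrC.
Qed.

End Limit.

Theorem halpern_convergence : exists p, [/\ D p, T p = p,
  (forall y, D y -> T y = y -> `|u - p| <= `|u - y|) & x @ \oo --> p].
Proof.
have [z hz] := browder_curve; have hzD n := (hz n).1; have hzA n := (hz n).2.
exists (limn z); split.
- exact: browder_limit_in_D hzD hzA.
- exact: browder_limit_fixed hzD hzA.
- exact: browder_limit_nearest hzD hzA.
- exact: halpern_cvg hz.
Qed.

End Iteration.
End Halpern.

Lemma in_M_indices (R : realType) (m : nat) (Omega : {fset (seq 'I_m)})
  (w : seq 'I_m -> R) : in_M Omega w -> (0 < m)%N.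
Proof.
case=> -[hiv _] _; case E: (Omega : seq _) => [|t s].
  by rewrite big_nil => /eqP; rewrite eq_sym oner_eq0.
have : t \in Omega by rewrite -[t \in Omega]/(t \in (Omega : seq _)) E inE eqxx.
by move/hiv; case: t {E} => // i _ _ _; exact: leq_ltn_trans (leq0n i) (ltn_ord i).
Qed.

Unset Implicit Arguments.

(* The iteration is Halpern's iteration for the averaged operator
   T = sum_t w(t) P[t], which is nonexpansive on D with Fix T = C. *)
Theorem theorem7 (R : realType) (H : completeNormedModType R)
  (ip : H -> H -> R) (D : set H) (m : nat) (C : 'I_m -> set H)
  (P : 'I_m -> H -> H) (Omega : {fset (seq 'I_m)}) (w : seq 'I_m -> R)
  (lam : nat -> R) (u x0 : H) (x : nat -> H) :
  hilbert_inner ip ->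
  D !=set0 -> closed D -> convex_set D ->
  (forall i, closed (C i) /\ convex_set (C i) /\ C i `<=` D) ->
  \bigcap_(i in [set: 'I_m]) C i !=set0 ->
  (forall i y, D y -> is_metric_proj (C i) y (P i y)) ->
  in_M Omega w ->
  steering lam ->
  D u -> D x0 ->
  x 0%N = x0 ->
  (forall k, x k.+1 = lam k *: u + (1 - lam k) *: \sum_(t <- Omega) w t *: Pt P t (x k)) ->
  exists p : H, is_metric_proj (\bigcap_(i in [set: 'I_m]) C i) u p /\ x @ \oo --> p.
Proof.
move=> hI nD clD cD hC [p0 hp0] hP hM hl Du Dx0 ex0 hx.
have [[_ hfit] hw01 hs] := hM.
have hw t : t \in (Omega : seq _) -> 0 < w t by case/hw01/andP.
have Cp0 i : C i p0 by exact: hp0.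
have Dx0' : D (x 0%N) by rewrite ex0.
pose i0 : 'I_m := Ordinal (in_M_indices hM).
have Dp0 : D p0 := (hC i0).2.2 _ (Cp0 i0).
have [p [Dp Tp hmin xp]] := halpern_convergence hI cD clD
  (avg_in_D hC hP hw hs cD nD) (avg_nonexp hI hC hP hw hs)
  Dp0 (avg_fixC hC hP hs Cp0) Du hl Dx0' hx.
exists p; split => //; split.
  move=> i _; apply: (avg_fix_in_C hI hC hP hw hs _ (ex_intro _ p0 Cp0) Dp Tp).
  by move=> j; have [t tO jt] := hfit j; exists t.
move=> y Cy; apply: hmin; first exact: (hC i0).2.2 _ (Cy i0 I).
exact: (avg_fixC hC hP hs (fun i => Cy i I)).
Qed.
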